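(* For every $n\ge3$ with $n\neq4$, the unidirectional cycle $\overrightarrow{C_n}$ is $\{0,2\}$-antimagic.
   Context: An oriented graph is a simple graph each of whose edges is given one direction. For vertices $u,v$, $d(u,v)$ is the length of a shortest directed path from $u$ to $v$ ($d(u,u)=0$). For a set $D$ of nonnegative integers, $N_D(v)=\{y : d(v,y)\in D\}$; for a bijection $f:V\to\{1,\dots,|V|\}$, $\omega_D(v)=\sum_{x\in N_D(v)}f(x)$ (empty sum $0$); $f$ is $D$-antimagic if distinct vertices have distinct $D$-weights, and the graph is $D$-antimagic if such an $f$ exists. The unidirectional cycle $\overrightarrow{C_n}$ ($n\ge3$) has vertices $v_1,\dots,v_n$ and arcs $(v_i,v_{i+1})$ for $1\le i\le n-1$ and $(v_n,v_1)$; $d(v_i,v_j)=(j-i)\bmod n$. *)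

From mathcomp Require Import all_boot.
Set Implicit Arguments. Unset Strict Implicit. Unset Printing Implicit Defensive.

(* Unidirectional cycle C_n on vertices 'I_n (v_{i+1} ~ index i),
   arcs i -> i+1 mod n; directed distance d(v_i,v_j) = (j - i) mod n. *)
Definition cyc_dist (n : nat) (u v : 'I_n) : nat := (v + n - u) %% n.

Definition DNbhd (n : nat) (D : pred nat) (v : 'I_n) : {set 'I_n} :=
  [set y | D (cyc_dist v y)].

Definition Dweight (n : nat) (D : pred nat) (f : 'I_n -> nat) (v : 'I_n) : nat :=
  \sum_(x in DNbhd D v) f x.

Definition is_labelling (n : nat) (f : 'I_n -> nat) : Prop :=
  injective f /\ (forall x, 1 <= f x <= n).

Definition D_antimagic_labelling (n : nat) (D : pred nat) (f : 'I_n -> nat) : Prop :=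
  is_labelling f /\ injective (Dweight D f).

Definition cycle_D_antimagic (n : nat) (D : pred nat) : Prop :=
  exists f : 'I_n -> nat, D_antimagic_labelling D f.

From mathcomp Require Import all_boot zify.

(* Since [N_{0,2}(v_i) = {v_i, v_(i+2)}], a labelling [f] has weights
   [f v_i + f v_(i+2)].  With [f v_i = i + 1] these are the even numbers
   [2i + 4] except at the two vertices where [i + 2] wraps around, whose
   weights [n] and [n + 2] are odd when [n] is odd.  When [n] is even,
   swapping the labels of [v_0] and [v_(n-1)] makes exactly four weights
   odd, namely [n + 3], [3], [2n - 1] and [n - 1]; they are pairwise distinct
   as soon as [n <> 4], and the remaining weights are still [2i + 4]. *)

Set Implicit Arguments.
Unset Strict Implicit.
Unset Printing Implicit Defensive.

Definition dist02 : pred nat := fun k => (k == 0) || (k == 2).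

Section CycleDistance.

Variable n : nat.
Hypothesis n_ge3 : 3 <= n.

Lemma cyc_distE (u v : 'I_n) :
  cyc_dist u v = if u <= v then v - u else v + n - u.
Proof.
have := ltn_ord u; have := ltn_ord v; rewrite /cyc_dist => vn un.
case: ifP => uv; last by rewrite modn_small; lia.
have -> : v + n - u = (v - u) + n by lia.
by rewrite modnDr modn_small; lia.
Qed.

Lemma modn_add2E (x : nat) : x < n ->
  (x + 2) %% n = if x + 2 < n then x + 2 else x + 2 - n.
Proof.
move=> xn; case: ifP => x2n; first by rewrite modn_small.
have -> : x + 2 = (x + 2 - n) + n by lia.
by rewrite modnDr modn_small; lia.
Qed.

Lemma DNbhd02 (v w : 'I_n) : val w = (v + 2) %% n -> DNbhd dist02 v = [set v; w].
Proof.
move=> wE; have vn := ltn_ord v.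
apply/setP => y; have yn := ltn_ord y.
rewrite !inE /dist02 cyc_distE -!(inj_eq val_inj) /= wE modn_add2E //.
by case: ifP => vy; case: ifP => v2n; apply/idP/idP; lia.
Qed.

Lemma Dweight02 (lab : nat -> nat) (v : 'I_n) :
  Dweight dist02 (fun x => lab (val x)) v = lab v + lab ((v + 2) %% n).
Proof.
have n_gt0 : 0 < n by lia.
pose w := Ordinal (ltn_pmod (v + 2) n_gt0).
have vw : v != w.
  by rewrite -(inj_eq val_inj) /= modn_add2E //; case: ifP; lia.
by rewrite /Dweight (DNbhd02 (w := w)) // big_setU1 ?inE //= big_set1.
Qed.

Lemma cycle02_antimagic_of_labelling (lab : nat -> nat) :
  {in gtn n &, injective lab} ->
  (forall x, x < n -> 0 < lab x <= n) ->
  {in gtn n &, injective (fun x => lab x + lab ((x + 2) %% n))} ->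
  cycle_D_antimagic n dist02.
Proof.
move=> lab_inj lab_range weight_inj.
exists (fun x => lab (val x)); split; first split.
- move=> x y /lab_inj xy; apply: val_inj; exact: xy (ltn_ord x) (ltn_ord y).
- move=> x; exact: lab_range (ltn_ord x).
- move=> x y; rewrite !Dweight02 => /weight_inj xy.
  apply: val_inj; exact: xy (ltn_ord x) (ltn_ord y).
Qed.

End CycleDistance.

Lemma odd_cycle02_antimagic (n : nat) : 3 <= n -> odd n -> cycle_D_antimagic n dist02.
Proof.
move=> n_ge3 n_odd; apply: (cycle02_antimagic_of_labelling n_ge3 (lab := succn)).
- by move=> x y _ _ [].
- by move=> x xn; lia.
- have [m n_eq] : exists m, n = m.*2.+1.
    by exists n./2; rewrite -[LHS]odd_double_half n_odd.
  move=> x y xn yn.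
  by rewrite !modn_add2E //; case: ifP => ?; case: ifP => ?; lia.
Qed.

Definition succ_swap_ends (n x : nat) : nat :=
  if x == 0 then n else if x == n.-1 then 1 else x.+1.

Lemma succ_swap_ends_weight (n x : nat) : 5 <= n -> x < n ->
  succ_swap_ends n x + succ_swap_ends n ((x + 2) %% n) =
    if x == 0 then n + 3 else if x == n - 1 then 3
    else if x == n - 2 then 2 * n - 1 else if x == n - 3 then n - 1
    else 2 * x + 4.
Proof.
move=> n_ge5 xn; rewrite modn_add2E // /succ_swap_ends; last by lia.
by case: (ltnP (x + 2) n) => ?; repeat case: ifP => /eqP ?; lia.
Qed.

Lemma even_cycle02_antimagic (n : nat) :
  3 <= n -> n != 4 -> ~~ odd n -> cycle_D_antimagic n dist02.
Proof.
move=> n_ge3 n_ne4 n_even.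
have [m n_eq] : exists m, n = m.*2.
  by exists n./2; rewrite -[LHS]odd_double_half (negbTE n_even).
have n_ge5 : 5 <= n by lia.
apply: (cycle02_antimagic_of_labelling n_ge3 (lab := succ_swap_ends n)).
- move=> x y xn yn; rewrite /succ_swap_ends.
  by repeat case: ifP => /eqP ?; lia.
- by move=> x xn; rewrite /succ_swap_ends; repeat case: ifP => /eqP ?; lia.
- move=> x y xn yn; rewrite !succ_swap_ends_weight //.
  by repeat case: ifP => /eqP ?; lia.
Qed.

Theorem mainTheorem12 (n : nat) :
  3 <= n -> n != 4 ->
  cycle_D_antimagic n (fun k : nat => (k == 0) || (k == 2)).
Proof.
move=> n_ge3 n_ne4.
have [n_odd | n_even] := boolP (odd n).
- exact: odd_cycle02_antimagic.
- exact: even_cycle02_antimagic.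
Qed.
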